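(* Consider the Markov process described in the context with $K=1$, satisfying Assumption (A) and the ergodicity condition (E). For each $x\in\{-1,1\}^c$ let $\beta_{0,x}$ denote the unique root in $(0,1)$ of equation $(\mathrm E_x)$. Then the largest of the $2^c$ roots $\beta_{0,x}$ is attained at $x=(1,1,\dots,1)$, i.e. $\beta_{0,x}\le\beta_{0,(1,\dots,1)}$ for all $x\in\{-1,1\}^c$.
   Context: Fix integers $c\ge 1$ and $K\ge1$ (in the claim $K=1$). Consider an irreducible continuous-time Markov process on $V\cup W$, where $V$ is finite and $W=\{\mathbf n=(n_0,\dots,n_c): n_0\in\{0,1,\dots\},\ n_i\in\{0,1\}\}$. For each $i\in\{1,\dots,c\}$ and integer $k\le K$ there are nonnegative rates $a_{k,i},b_{k,i},c_{k,i},d_{k,i}$. From $\mathbf n\in W$, for each $i$ and $k\in\{-n_0,\dots,K\}$, the process jumps (changing only coordinates $0$ and $i$) from $(n_0,n_i)=(n_0,0)$ to $(n_0+k,1)$ at rate $a_{k,i}$ and to $(n_0+k,0)$ at rate $b_{k,i}$, and from $(n_0,1)$ to $(n_0+k,1)$ at rate $c_{k,i}$ and to $(n_0+k,0)$ at rate $d_{k,i}$; from $\mathbf n$ it jumps into $V$ with total rate $\sum_i\sum_{k\le -n_0-1}((1-n_i)(a_{k,i}+b_{k,i})+n_i(c_{k,i}+d_{k,i}))$; no other transitions leave $W$, and from $V$ no transitions go to states with $n_0\ge K$. Let $A_i(z)=\sum_{k=-\infty}^K a_{k,i}z^{K-k}$ and similarly $B_i,C_i,D_i$ with $b,c,d$.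 Assumption (A): for each $i$: (i) $A_i(1),B_i(1),C_i(1),D_i(1)<\infty$; (ii) $A_i(1),D_i(1)>0$; (iii) $A_i'(1),B_i'(1),C_i'(1),D_i'(1)<\infty$; (iv) $a_{K,i}=0$ or $d_{K,i}=0$; (v) $b_{K,i}=c_{K,i}\ne0$. Ergodicity condition (E): $0<\sum_{i=1}^c\frac{1}{A_i(1)+D_i(1)}\bigl(D_i(1)(A_i'(1)-KA_i(1)+B_i'(1)-KB_i(1))+A_i(1)(C_i'(1)-KC_i(1)+D_i'(1)-KD_i(1))\bigr)$. Let $F_i(z)=z^K(A_i(1)+B_i(1)-C_i(1)-D_i(1))-B_i(z)+C_i(z)$. For real $\beta_0\in[0,1]$ let $R_i(\beta_0)=\sqrt{F_i(\beta_0)^2+4A_i(\beta_0)D_i(\beta_0)}$ (nonnegative square root). For $x\in\{-1,1\}^c$, equation $(\mathrm E_x)$ in the unknown $\beta_0$ is \[0=\sum_{i=1}^c\Bigl(x_iR_i(\beta_0)+B_i(\beta_0)+C_i(\beta_0)-\beta_0^K\bigl(A_i(1)+B_i(1)+C_i(1)+D_i(1)\bigr)\Bigr).\] *)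

From HB Require Import structures.
From mathcomp Require Import all_boot all_order all_algebra.
From mathcomp Require Import all_classical all_reals all_analysis.
Set Implicit Arguments. Unset Strict Implicit. Unset Printing Implicit Defensive.
Import Order.TTheory GRing.Theory Num.Theory.
Import numFieldNormedType.Exports.
Local Open Scope ring_scope.

(* Convention (K = 1): a rate family (a_{k,i})_{k <= 1} for a fixed i is
   encoded as a sequence  a : nat -> R  with  a m = a_{1-m,i}  (m = K - k).
   Hence A_i(z) = sum_{k<=K} a_{k,i} z^{K-k} = sum_{m>=0} a m z^m. *)

Section GF.
Variable R : realType.

Definition gf (a : nat -> R) (z : R) : R :=
  limn (series (fun m => a m * z ^+ m)).

Definition gf_finite1 (a : nat -> R) : Prop := cvgn (series a).

(* A'(1) = sum_m m a m  (the derivative of the power series at z = 1) *)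
Definition dgf1 (a : nat -> R) : R := limn (series (fun m => m%:R * a m)).

Definition dgf1_finite (a : nat -> R) : Prop :=
  cvgn (series (fun m => m%:R * a m)).

Definition Kc : nat := 1.

Definition assumptionA (a b c d : nat -> R) : Prop :=
  ((forall m, 0 <= a m) /\ (forall m, 0 <= b m) /\
      (forall m, 0 <= c m) /\ (forall m, 0 <= d m)) /\
      (gf_finite1 a /\ gf_finite1 b /\ gf_finite1 c /\ gf_finite1 d) /\
      (0 < gf a 1 /\ 0 < gf d 1) /\
      (dgf1_finite a /\ dgf1_finite b /\ dgf1_finite c /\ dgf1_finite d) /\
      (* (iv): a_{K,i} = 0 or d_{K,i} = 0 *) (a 0%N = 0 \/ d 0%N = 0) /\
      (* (v): b_{K,i} = c_{K,i} <> 0 *) (b 0%N = c 0%N /\ b 0%N <> 0).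

Definition Ffun (a b c d : nat -> R) (z : R) : R :=
  z ^+ Kc * (gf a 1 + gf b 1 - gf c 1 - gf d 1) - gf b z + gf c z.

Definition Rfun (a b c d : nat -> R) (z : R) : R :=
  Num.sqrt (Ffun a b c d z ^+ 2 + 4 * gf a z * gf d z).

End GF.

Definition ergodicE (R : realType) (n : nat) (a b c d : 'I_n -> nat -> R) : Prop :=
  0 < \sum_(i < n) (gf (a i) 1 + gf (d i) 1)^-1 *
        (gf (d i) 1 * (dgf1 (a i) - Kc%:R * gf (a i) 1 + dgf1 (b i) - Kc%:R * gf (b i) 1)
       + gf (a i) 1 * (dgf1 (c i) - Kc%:R * gf (c i) 1 + dgf1 (d i) - Kc%:R * gf (d i) 1)).

Definition eqEx (R : realType) (n : nat) (a b c d : 'I_n -> nat -> R)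
  (x : 'I_n -> R) (beta0 : R) : Prop :=
  0 = \sum_(i < n) (x i * Rfun (a i) (b i) (c i) (d i) beta0
                    + gf (b i) beta0 + gf (c i) beta0
                    - beta0 ^+ Kc * (gf (a i) 1 + gf (b i) 1 + gf (c i) 1 + gf (d i) 1)).

From HB Require Import structures.
From mathcomp Require Import all_boot all_order all_algebra.
From mathcomp Require Import all_classical all_reals all_analysis.
From mathcomp Require Import ring lra.
Import Order.TTheory GRing.Theory Num.Theory.
Import numFieldNormedType.Exports.
Local Open Scope classical_set_scope.
Local Open Scope ring_scope.

(* Let lambda_i(z) be the Perron root of
     M_i(z) = [[B_i(z) - z (A_i(1) + B_i(1)), A_i(z)], [D_i(z), C_i(z) - z (C_i(1) + D_i(1))]].
   The i-th summand of (E_x) is 2 lambda_i(z) when x_i = 1 and at most that otherwise, so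
   sum_i lambda_i vanishes at beta_{0,1} and is nonnegative at beta_{0,x}.
   The entries of M_i(z)/z + k_i I are power series with nonnegative coefficients divided
   by z, hence log-convex in log z; by Kingman's theorem so is their Perron root, and
   Lambda(z) = sum_i lambda_i(z)/z satisfies
     Lambda(b^th u^(1-th)) <= th Lambda(b) + (1 - th) Lambda(u).
   M_i(1) is a generator with Perron root 0; perturbing its Perron pair gives
   lambda_i(1 - h) <= - h drift_i + o(h), so by (E) Lambda < 0 just below 1.  If
   beta_{0,1} < beta_{0,x}, interpolating between beta_{0,1} and such a point yields
   Lambda(beta_{0,x}) < 0, a contradiction. *)

Section Perron2.
Context {R : realType}.
Implicit Types p q r s mu : R.

(* The largest eigenvalue of [[p, r], [s, q]]. *)
Definition perron2 p q r s : R := (p + q + Num.sqrt ((p - q) ^+ 2 + 4 * r * s)) / 2.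

Lemma perron2_shift p q r s k : perron2 (p + k) (q + k) r s = perron2 p q r s + k.
Proof. by rewrite /perron2 (_ : p + k - (q + k) = p - q); [field | ring]. Qed.

Lemma perron2_scale p q r s t : 0 < t ->
  perron2 (t * p) (t * q) (t * r) (t * s) = t * perron2 p q r s.
Proof.
move=> t_gt0; rewrite /perron2.
have -> : (t * p - t * q) ^+ 2 + 4 * (t * r) * (t * s)
          = t ^+ 2 * ((p - q) ^+ 2 + 4 * r * s) by ring.
by rewrite sqrtrM ?sqr_ge0 // sqrtr_sqr gtr0_norm //; field.
Qed.

Lemma perron2_gt_diag p q r s : 0 < r -> 0 < s -> p < perron2 p q r s.
Proof.
move=> r_gt0 s_gt0; have : `|p - q| < Num.sqrt ((p - q) ^+ 2 + 4 * r * s).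
  rewrite -sqrtr_sqr ltr_sqrt ?ltrDl ?mulr_gt0 //.
  by rewrite ltr_wpDl ?sqr_ge0 ?mulr_gt0.
rewrite /perron2 ltr_pdivlMr //; move: (Num.sqrt _) => S.
by have := ler_norm (p - q); lra.
Qed.

Lemma perron2_eigenvector p q r s : 0 <= r -> 0 <= s ->
  s * r + q * (perron2 p q r s - p) = perron2 p q r s * (perron2 p q r s - p).
Proof.
move=> r_ge0 s_ge0.
have : Num.sqrt ((p - q) ^+ 2 + 4 * r * s) ^+ 2 = (p - q) ^+ 2 + 4 * r * s.
  by rewrite sqr_sqrtr // addr_ge0 ?sqr_ge0 ?mulr_ge0.
rewrite /perron2; move: (Num.sqrt _) => S S2.
apply/eqP; rewrite -subr_eq0 (_ : _ - _ = ((p - q) ^+ 2 + 4 * r * s - S ^+ 2) / 4).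
  by rewrite S2 subrr mul0r.
by field.
Qed.

(* Collatz-Wielandt bound. *)
Lemma perron2_le_subinvariant p q r s mu v1 v2 :
  0 < v1 -> 0 < v2 -> 0 <= r -> 0 <= s ->
  p * v1 + r * v2 <= mu * v1 -> s * v1 + q * v2 <= mu * v2 ->
  perron2 p q r s <= mu.
Proof.
move=> v1_gt0 v2_gt0 r_ge0 s_ge0 row1 row2.
have hp : r * v2 <= (mu - p) * v1 by lra.
have hq : s * v1 <= (mu - q) * v2 by lra.
have mp : 0 <= mu - p.
  by rewrite -(pmulr_lge0 _ v1_gt0); apply: le_trans hp; rewrite mulr_ge0 // ltW.
have mq : 0 <= mu - q.
  by rewrite -(pmulr_lge0 _ v2_gt0); apply: le_trans hq; rewrite mulr_ge0 // ltW.
have rs : r * s <= (mu - p) * (mu - q).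
  have : (r * v2) * (s * v1) <= ((mu - p) * v1) * ((mu - q) * v2).
    by apply: ler_pM => //; rewrite mulr_ge0 // ltW.
  rewrite (_ : r * v2 * _ = r * s * (v1 * v2)); last by ring.
  rewrite (_ : (mu - p) * v1 * _ = (mu - p) * (mu - q) * (v1 * v2)); last by ring.
  by rewrite ler_pM2r // mulr_gt0.
rewrite /perron2 ler_pdivrMr // -lerBrDl.
have h0 : 0 <= mu * 2 - (p + q) by lra.
rewrite -(ger0_norm h0) -sqrtr_sqr ler_sqrt ?sqr_ge0 //.
rewrite (_ : (mu * 2 - (p + q)) ^+ 2 = (p - q) ^+ 2 + 4 * ((mu - p) * (mu - q))); last by ring.
by rewrite lerD2l -mulrA ler_pM2l.
Qed.

End Perron2.

Section GeometricMean.
Context {R : realType}.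
Variable th : R.
Hypothesis th_gt0 : 0 < th.
Hypothesis th_lt1 : th < 1.

Definition gmean (x y : R) : R := x `^ th * y `^ (1 - th).

Let th'_gt0 : 0 < 1 - th. Proof. by rewrite subr_gt0. Qed.

Lemma gmean_ge0 x y : 0 <= gmean x y.
Proof. by rewrite mulr_ge0 ?powR_ge0. Qed.

Lemma gmean_gt0 x y : 0 < x -> 0 < y -> 0 < gmean x y.
Proof. by move=> x_gt0 y_gt0; rewrite mulr_gt0 ?powR_gt0. Qed.

Lemma gmeanM x y x' y' : 0 <= x -> 0 <= y -> 0 <= x' -> 0 <= y' ->
  gmean (x * x') (y * y') = gmean x y * gmean x' y'.
Proof. by move=> *; rewrite /gmean !powRM //; ring. Qed.

Lemma ler_gmean x y x' y' : 0 <= x -> 0 <= y -> x <= x' -> y <= y' ->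
  gmean x y <= gmean x' y'.
Proof.
move=> x_ge0 y_ge0 xx' yy'; apply: ler_pM; rewrite ?powR_ge0 //.
  by apply: ge0_ler_powR; rewrite ?nnegrE ?(ltW th_gt0) ?(le_trans x_ge0).
by apply: ge0_ler_powR; rewrite ?nnegrE ?(ltW th'_gt0) ?(le_trans y_ge0).
Qed.

Lemma gmeanxx x : 0 <= x -> gmean x x = x.
Proof.
by move=> x_ge0; rewrite /gmean -powRD ?subrKC ?powRr1 // oner_eq0.
Qed.

Lemma gmeanV x y : 0 <= x -> 0 <= y -> gmean x^-1 y^-1 = (gmean x y)^-1.
Proof.
move=> x_ge0 y_ge0; rewrite /gmean invfM -!powRN.
by rewrite -[x^-1]powR_inv1 // -[y^-1]powR_inv1 // -!powRrM !mulN1r.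
Qed.

Let powRK (x r : R) : 0 <= x -> r != 0 -> (x `^ r) `^ r^-1 = x.
Proof. by move=> x_ge0 r_neq0; rewrite -powRrM mulfV // powRr1. Qed.

Lemma gmeanD_le x1 x2 y1 y2 : 0 <= x1 -> 0 <= x2 -> 0 <= y1 -> 0 <= y2 ->
  gmean x1 y1 + gmean x2 y2 <= gmean (x1 + x2) (y1 + y2).
Proof.
move=> x1_ge0 x2_ge0 y1_ge0 y2_ge0.
have := @hoelder2 R (x1 `^ th) (x2 `^ th) (y1 `^ (1 - th)) (y2 `^ (1 - th))
  th^-1 (1 - th)^-1 (powR_ge0 _ _) (powR_ge0 _ _) (powR_ge0 _ _) (powR_ge0 _ _).
by rewrite !invr_gt0 th_gt0 th'_gt0 !invrK !powRK ?gt_eqF //; apply; ring.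
Qed.

Lemma gmean_le_mean x y : 0 <= x -> 0 <= y -> gmean x y <= th * x + (1 - th) * y.
Proof.
move=> x_ge0 y_ge0.
have := @conjugate_powR R (x `^ th) (y `^ (1 - th)) th^-1 (1 - th)^-1
  (powR_ge0 _ _) (powR_ge0 _ _).
rewrite !invr_gt0 th_gt0 th'_gt0 !invrK !powRK ?gt_eqF //.
by rewrite (mulrC th) (mulrC (1 - th)); apply; ring.
Qed.

(* Kingman's theorem: test the subinvariance bound on the geometric mean of the two
   Perron eigenvectors (r, L - p). *)
Lemma perron2_gmean_le p0 q0 r0 s0 p1 q1 r1 s1 p q r s :
  0 <= p0 -> 0 <= q0 -> 0 < r0 -> 0 < s0 ->
  0 <= p1 -> 0 <= q1 -> 0 < r1 -> 0 < s1 -> 0 <= r -> 0 <= s ->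
  p <= gmean p0 p1 -> q <= gmean q0 q1 -> r <= gmean r0 r1 -> s <= gmean s0 s1 ->
  perron2 p q r s <= gmean (perron2 p0 q0 r0 s0) (perron2 p1 q1 r1 s1).
Proof.
move=> p0_ge0 q0_ge0 r0_gt0 s0_gt0 p1_ge0 q1_ge0 r1_gt0 s1_gt0 r_ge0 s_ge0 hp hq hr hs.
have eig0 := perron2_eigenvector p0 q0 _ _ (ltW r0_gt0) (ltW s0_gt0).
have eig1 := perron2_eigenvector p1 q1 _ _ (ltW r1_gt0) (ltW s1_gt0).
have w0 : 0 < perron2 p0 q0 r0 s0 - p0 by rewrite subr_gt0 perron2_gt_diag.
have w1 : 0 < perron2 p1 q1 r1 s1 - p1 by rewrite subr_gt0 perron2_gt_diag.
move: eig0 eig1 w0 w1.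
set L0 := perron2 p0 q0 r0 s0; set L1 := perron2 p1 q1 r1 s1 => eig0 eig1 w0 w1.
have [r0_ge0 s0_ge0 r1_ge0 s1_ge0] := And4 (ltW r0_gt0) (ltW s0_gt0) (ltW r1_gt0) (ltW s1_gt0).
have [w0_ge0 w1_ge0] := conj (ltW w0) (ltW w1).
have L0_ge0 : 0 <= L0 by lra.
have L1_ge0 : 0 <= L1 by lra.
have Gr : 0 < gmean r0 r1 by rewrite gmean_gt0.
have Gw : 0 < gmean (L0 - p0) (L1 - p1) by rewrite gmean_gt0.
apply: (perron2_le_subinvariant _ _ _ _ _ _ _ Gr Gw r_ge0 s_ge0).
- apply: le_trans (_ : gmean p0 p1 * gmean r0 r1 + gmean r0 r1 * gmean (L0 - p0) (L1 - p1)
                       <= _).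
    by rewrite lerD // ler_wpM2r ?gmean_ge0.
  rewrite -!gmeanM //; apply: le_trans (gmeanD_le _ _ _ _ _ _ _ _) _; rewrite ?mulr_ge0 //.
  have -> : p0 * r0 + r0 * (L0 - p0) = L0 * r0 by ring.
  by have -> : p1 * r1 + r1 * (L1 - p1) = L1 * r1 by ring.
- apply: le_trans (_ : gmean s0 s1 * gmean r0 r1 + gmean q0 q1 * gmean (L0 - p0) (L1 - p1)
                       <= _).
    by rewrite lerD // ler_wpM2r ?gmean_ge0.
  rewrite -!gmeanM //; apply: le_trans (gmeanD_le _ _ _ _ _ _ _ _) _; rewrite ?mulr_ge0 //.
  by rewrite eig0 eig1.
Qed.

End GeometricMean.
Arguments ler_gmean {R th}.
Arguments gmeanD_le {R th}.
Arguments gmean_le_mean {R th}.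
Arguments perron2_gmean_le {R th}.

Lemma gmean_between {R : realType} (b1 b u : R) : 0 < b1 -> b1 < b -> b < u ->
  exists2 th, 0 < th < 1 & gmean th b1 u = b.
Proof.
move=> b1_gt0 b1b bu; have b_gt0 := lt_trans b1_gt0 b1b; have u_gt0 := lt_trans b_gt0 bu.
have l1 : ln b1 < ln b by rewrite ltr_ln.
have l2 : ln b < ln u by rewrite ltr_ln.
have den : 0 < ln u - ln b1 by lra.
exists ((ln u - ln b) / (ln u - ln b1)).
  apply/andP; split; first by rewrite divr_gt0 // subr_gt0.
  by rewrite ltr_pdivrMr // mul1r; lra.
rewrite /gmean /powR !gt_eqF // -expRD.
rewrite (_ : _ + _ = ln b) ?lnK //; field; exact: lt0r_neq0.
Qed.

Lemma near0_mulr_le {R : realType} (M e : R) : 0 < e ->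
  \forall h \near 0^'+, h * M <= e.
Proof.
move=> e_gt0; have d_gt0 : 0 < e / (`|M| + 1) by rewrite divr_gt0 ?ltr_wpDl.
near=> h.
have h_gt0 : 0 < h by near: h; exact: nbhs_right_gt.
have : h < e / (`|M| + 1) by near: h; exact: nbhs_right_lt.
rewrite ltr_pdivlMr ?ltr_wpDl // => he; apply: le_trans (ler_norm _) _.
by rewrite normrM gtr0_norm //; nra.
Unshelve. all: by end_near. Qed.

Section GeneratingFunction.
Context {R : realType}.
Context {a : nat -> R}.
Hypothesis a_ge0 : forall m, 0 <= a m.
Hypothesis a_fin : gf_finite1 a.
Implicit Types z : R.

Let term_ge0 z m : 0 <= z -> 0 <= a m * z ^+ m.
Proof. by move=> z_ge0; rewrite mulr_ge0 ?exprn_ge0. Qed.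

Lemma gf_cvg z : 0 <= z <= 1 -> cvgn (series (fun m => a m * z ^+ m)).
Proof.
case/andP => z_ge0 z_le1; apply: (series_le_cvg (v_ := a)) => // m.
  exact: term_ge0.
by rewrite ler_piMr ?exprn_ile1.
Qed.

Lemma gf_ge_partial n z : 0 <= z <= 1 -> series (fun m => a m * z ^+ m) n <= gf a z.
Proof.
move=> z01; rewrite /gf; apply: nondecreasing_cvgn_le; last exact: gf_cvg.
rewrite seriesEnat; apply: nondecreasing_series => m _ _.
by apply: term_ge0; case/andP: z01.
Qed.

Lemma gf_le_of z x : 0 <= z <= 1 ->
  (forall n, series (fun m => a m * z ^+ m) n <= x) -> gf a z <= x.
Proof. by move=> z01 hx; rewrite /gf; apply: limr_le; [exact: gf_cvg | exact: nearW]. Qed.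

Lemma gf_ge0 z : 0 <= z <= 1 -> 0 <= gf a z.
Proof. by move=> z01; apply: le_trans _ (gf_ge_partial 0 z z01); rewrite /series/= big_geq. Qed.

Lemma gf_gt0 z : 0 < gf a 1 -> 0 < z <= 1 -> 0 < gf a z.
Proof.
move=> gf1_gt0 /andP[z_gt0 z_le1]; have z01 : 0 <= z <= 1 by rewrite ltW.
have [m am_gt0] : exists m, 0 < a m.
  apply/not_existsP => a_le0; suff : gf a 1 <= 0 by lra.
  apply: gf_le_of; first by rewrite ler01 lexx.
  move=> n; rewrite /series/=; apply: sumr_le0 => m _.
  by rewrite expr1n mulr1 leNgt; apply/negP/a_le0.
apply: lt_le_trans _ (gf_ge_partial m.+1 z z01).
rewrite seriesSr ltr_wpDl ?mulr_gt0 ?exprn_gt0 //.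
by rewrite /series/=; apply: sumr_ge0 => k _; exact: term_ge0 (ltW z_gt0).
Qed.

Section LogConvexity.
Variable th : R.
Hypothesis th_gt0 : 0 < th.
Hypothesis th_lt1 : th < 1.

Lemma gf_gmean_le z1 z2 : 0 <= z1 <= 1 -> 0 <= z2 <= 1 ->
  gf a (gmean th z1 z2) <= gmean th (gf a z1) (gf a z2).
Proof.
move=> /andP[z1_ge0 z1_le1] /andP[z2_ge0 z2_le1].
have g01 : 0 <= gmean th z1 z2 <= 1.
  by rewrite gmean_ge0 /= -[X in _ <= X](gmeanxx th 1 ler01) ler_gmean.
have gpow n : gmean th z1 z2 ^+ n = gmean th (z1 ^+ n) (z2 ^+ n).
  elim: n => [|n IH]; first by rewrite !expr0 gmeanxx.
  by rewrite !exprS IH gmeanM ?exprn_ge0.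
have partial n : series (fun m => a m * gmean th z1 z2 ^+ m) n <=
    gmean th (series (fun m => a m * z1 ^+ m) n) (series (fun m => a m * z2 ^+ m) n).
  have ps_ge0 z k : 0 <= z -> 0 <= series (fun m => a m * z ^+ m) k.
    by move=> z_ge0; rewrite /series/=; apply: sumr_ge0 => m _; exact: term_ge0.
  elim: n => [|n IH]; first by rewrite /series/= !big_geq // gmeanxx.
  rewrite !seriesSr; apply: le_trans _ (gmeanD_le th_gt0 th_lt1 _ _ _ _ _ _ _ _);
    rewrite ?ps_ge0 ?term_ge0 //.
  by apply: lerD => //; rewrite gmeanM ?exprn_ge0 // gmeanxx // gpow.
apply: gf_le_of => // n; apply: le_trans (partial n) _.
apply: ler_gmean => //; rewrite ?gf_ge_partial ?z1_ge0 ?z2_ge0 //.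
  by rewrite /series/=; apply: sumr_ge0 => m _; exact: term_ge0.
by rewrite /series/=; apply: sumr_ge0 => m _; exact: term_ge0.
Qed.

Lemma gf_div_gmean_le z1 z2 k : 0 < z1 <= 1 -> 0 < z2 <= 1 -> 0 <= k ->
  gf a (gmean th z1 z2) / gmean th z1 z2 + k
  <= gmean th (gf a z1 / z1 + k) (gf a z2 / z2 + k).
Proof.
move=> /andP[z1_gt0 z1_le1] /andP[z2_gt0 z2_le1] k_ge0.
have z1_01 : 0 <= z1 <= 1 by rewrite ltW.
have z2_01 : 0 <= z2 <= 1 by rewrite ltW.
apply: le_trans _ (gmeanD_le th_gt0 th_lt1 _ _ _ _ _ k_ge0 _ k_ge0);
  rewrite ?divr_ge0 ?gf_ge0 //; try exact: ltW.
rewrite gmeanxx // lerD2r -gmeanV ?gmeanM ?invr_ge0 ?gf_ge0 //; try exact: ltW.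
by rewrite ler_wpM2r ?invr_ge0 ?gmean_ge0 // gf_gmean_le.
Qed.

End LogConvexity.
End GeneratingFunction.

Section Bernoulli.
Context {R : realType}.
Context {h : R}.
Hypothesis h01 : 0 <= h <= 1.

Lemma bernoulli_le m : 1 - m%:R * h <= (1 - h) ^+ m.
Proof.
have /andP[h_ge0 h_le1] := h01.
elim: m => [|m IH]; first by rewrite mul0r subr0 expr0.
rewrite exprS -natr1; apply: le_trans (ler_wpM2l _ IH); last lra.
have : 0 <= m%:R * h * h by rewrite !mulr_ge0.
lra.
Qed.

Lemma bernoulli2_ge m : (1 - h) ^+ m <= 1 - m%:R * h + (m%:R * h) ^+ 2.
Proof.
have /andP[h_ge0 h_le1] := h01.
elim: m => [|m IH]; first by rewrite mul0r subr0 expr0 expr0n addr0.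
rewrite exprS -natr1; apply: le_trans (ler_wpM2l _ IH) _; first lra.
have : 0 <= m%:R ^+ 2 * h ^+ 3 by rewrite mulr_ge0 ?exprn_ge0.
have : 0 <= m%:R * h ^+ 2 by rewrite mulr_ge0 ?exprn_ge0.
have : 0 <= h ^+ 2 by rewrite exprn_ge0.
have -> : (1 - h) * (1 - m%:R * h + (m%:R * h) ^+ 2) = 1 - (m%:R + 1) * h
    + ((m%:R + 1) * h) ^+ 2 - (m%:R * h ^+ 2 + m%:R ^+ 2 * h ^+ 3 + h ^+ 2) by ring.
lra.
Qed.

End Bernoulli.

Section DerivativeAtOne.
Context {R : realType}.
Context {a : nat -> R}.
Hypothesis a_ge0 : forall m, 0 <= a m.
Hypothesis a_fin : gf_finite1 a.
Hypothesis da_fin : dgf1_finite a.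
Implicit Types h : R.

Let ma m := m%:R * a m.
Let ma_ge0 m : 0 <= ma m. Proof. by rewrite mulr_ge0. Qed.

Let partial_le_dgf1 n : series ma n <= dgf1 a.
Proof.
apply: nondecreasing_cvgn_le => //; rewrite seriesEnat.
by apply: nondecreasing_series => m _ _; exact: ma_ge0.
Qed.

Lemma dgf1_ge0 : 0 <= dgf1 a.
Proof. by apply: le_trans (partial_le_dgf1 0); rewrite /series/= big_geq. Qed.

Let dterm h m := a m * (1 - (1 - h) ^+ m).

Let dterm_ge0 h m : 0 <= h <= 1 -> 0 <= dterm h m.
Proof. by move=> h01; apply: mulr_ge0 => //; rewrite subr_ge0; apply: exprn_ile1; lra. Qed.

Let dtermE h : dterm h = (fun m => a m * 1 ^+ m) - (fun m => a m * (1 - h) ^+ m).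
Proof. by apply/funext => m; rewrite /dterm !fctE expr1n mulrBr mulr1. Qed.

Let dterm_cvg h : 0 <= h <= 1 -> cvgn (series (dterm h)).
Proof.
move=> h01; rewrite dtermE; apply: is_cvg_seriesB; apply: gf_cvg => //; lra.
Qed.

Let gf_subE h : 0 <= h <= 1 -> gf a 1 - gf a (1 - h) = limn (series (dterm h)).
Proof.
move=> h01; rewrite dtermE lim_seriesB //; apply: gf_cvg => //; lra.
Qed.

Lemma gf_sub_ge0 h : 0 <= h <= 1 -> 0 <= gf a 1 - gf a (1 - h).
Proof.
move=> h01; rewrite gf_subE //; apply: limr_ge; first exact: dterm_cvg.
by apply: nearW => n; rewrite /series/=; apply: sumr_ge0 => m _; exact: dterm_ge0.
Qed.

Lemma gf_sub_le h : 0 <= h <= 1 -> gf a 1 - gf a (1 - h) <= h * dgf1 a.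
Proof.
move=> h01; rewrite gf_subE //; apply: limr_le; first exact: dterm_cvg.
apply: nearW => n; apply: le_trans (_ : h * series ma n <= _); last first.
  by rewrite ler_wpM2l //; case/andP: h01.
rewrite /series/= mulr_sumr; apply: ler_sum => m _.
rewrite /dterm /ma (_ : h * (m%:R * a m) = a m * (m%:R * h)); last by ring.
by apply: ler_wpM2l => //; have := bernoulli_le h01 m; lra.
Qed.

Lemma gf_sub_ge_partial h N : 0 <= h <= 1 ->
  h * (1 - N%:R * h) * series ma N <= gf a 1 - gf a (1 - h).
Proof.
move=> h01; rewrite gf_subE //; apply: le_trans (_ : series (dterm h) N <= _); last first.
  apply: nondecreasing_cvgn_le; last exact: dterm_cvg.
  by rewrite seriesEnat; apply: nondecreasing_series => m _ _; exact: dterm_ge0.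
rewrite /series/= mulr_sumr; apply: ler_sum_nat => m /andP[_ mN].
rewrite /dterm /ma (_ : _ * _ * _ = a m * (m%:R * h * (1 - N%:R * h))); last by ring.
apply: ler_wpM2l => //; have h_ge0 : 0 <= h by case/andP: h01.
have : (m%:R * h) ^+ 2 <= m%:R * h * (N%:R * h).
  by rewrite expr2 ler_wpM2l ?mulr_ge0 // ler_wpM2r // ler_nat ltnW.
by have := bernoulli2_ge h01 m; lra.
Qed.

Lemma gf_sub_ge_near eta : 0 < eta ->
  \forall h \near 0^'+, h * (dgf1 a - eta) <= gf a 1 - gf a (1 - h).
Proof.
move=> eta_gt0; have [N hN] : exists N, dgf1 a - eta / 2 <= series ma N.
  apply/not_existsP => hN; suff : dgf1 a <= dgf1 a - eta / 2 by lra.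
  apply: limr_le => //; apply: nearW => n.
  by rewrite leNgt; apply/negP => /ltW; exact: hN.
near=> h.
have h_gt0 : 0 < h by near: h; exact: nbhs_right_gt.
have h_ge0 := ltW h_gt0.
have h01 : 0 <= h <= 1 by rewrite h_ge0 /=; near: h; apply: nbhs_right_le; exact: ltr01.
have hND : h * (N%:R * dgf1 a) <= eta / 2 by near: h; apply: near0_mulr_le; lra.
apply: le_trans _ (gf_sub_ge_partial h N h01).
have P_le := partial_le_dgf1 N; have P_ge0 : 0 <= series ma N.
  by rewrite /series/=; apply: sumr_ge0 => m _; exact: ma_ge0.
have : h * (N%:R * h * series ma N) <= h * (eta / 2).
  rewrite ler_wpM2l //; apply: le_trans _ hND.
  rewrite (_ : _ * h * _ = h * (N%:R * series ma N)); last by ring.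
  by rewrite ler_wpM2l // ler_wpM2l.
have : h * (dgf1 a - eta / 2) <= h * series ma N by rewrite ler_wpM2l.
lra.
Unshelve. all: by end_near. Qed.

End DerivativeAtOne.

Section Component.
Context {R : realType}.
Variables a b c d : nat -> R.
Implicit Types z h : R.

Definition perron_root z : R :=
  perron2 (gf b z - z * (gf a 1 + gf b 1)) (gf c z - z * (gf c 1 + gf d 1))
          (gf a z) (gf d z).

Definition mean_drift : R :=
  (gf a 1 + gf d 1)^-1 * (gf d 1 * (dgf1 a - gf a 1 + dgf1 b - gf b 1)
                          + gf a 1 * (dgf1 c - gf c 1 + dgf1 d - gf d 1)).

Lemma eqEx_summand1 z :
  1 * Rfun a b c d z + gf b z + gf c z - z ^+ Kc * (gf a 1 + gf b 1 + gf c 1 + gf d 1)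
  = 2 * perron_root z.
Proof.
rewrite /Rfun (_ : Ffun a b c d z = - ((gf b z - z * (gf a 1 + gf b 1))
                                       - (gf c z - z * (gf c 1 + gf d 1)))).
  by rewrite sqrrN /perron_root /perron2 /Kc expr1 mul1r; field.
by rewrite /Ffun /Kc expr1; ring.
Qed.

Hypothesis hA : assumptionA a b c d.

Let a_ge0 : forall m, 0 <= a m. Proof. by case: hA => -[]. Qed.
Let b_ge0 : forall m, 0 <= b m. Proof. by case: hA => -[_ []]. Qed.
Let c_ge0 : forall m, 0 <= c m. Proof. by case: hA => -[_ [_ []]]. Qed.
Let d_ge0 : forall m, 0 <= d m. Proof. by case: hA => -[_ [_ [_]]]. Qed.
Let a_fin : gf_finite1 a. Proof. by case: hA => _ [[]]. Qed.
Let b_fin : gf_finite1 b. Proof. by case: hA => _ [[_ []]]. Qed.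
Let c_fin : gf_finite1 c. Proof. by case: hA => _ [[_ [_ []]]]. Qed.
Let d_fin : gf_finite1 d. Proof. by case: hA => _ [[_ [_ [_]]]]. Qed.
Let A1_gt0 : 0 < gf a 1. Proof. by case: hA => _ [_ [[]]]. Qed.
Let D1_gt0 : 0 < gf d 1. Proof. by case: hA => _ [_ [[]]]. Qed.
Let da_fin : dgf1_finite a. Proof. by case: hA => _ [_ [_ [[]]]]. Qed.
Let db_fin : dgf1_finite b. Proof. by case: hA => _ [_ [_ [[_ []]]]]. Qed.
Let dc_fin : dgf1_finite c. Proof. by case: hA => _ [_ [_ [[_ [_ []]]]]]. Qed.
Let dd_fin : dgf1_finite d. Proof. by case: hA => _ [_ [_ [[_ [_ [_]]]]]]. Qed.

Let k := gf a 1 + gf b 1 + gf c 1 + gf d 1.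

Let perron_root_divE z : 0 < z ->
  perron_root z / z + k = perron2 (gf b z / z + (gf c 1 + gf d 1))
    (gf c z / z + (gf a 1 + gf b 1)) (gf a z / z) (gf d z / z).
Proof.
move=> z_gt0; have z_neq0 := lt0r_neq0 z_gt0.
rewrite (_ : gf b z / z + _ = gf b z / z - (gf a 1 + gf b 1) + k); last by rewrite /k; ring.
rewrite (_ : gf c z / z + _ = gf c z / z - (gf c 1 + gf d 1) + k); last by rewrite /k; ring.
rewrite perron2_shift; congr (_ + _).
rewrite -[RHS](mulKf z_neq0) -perron2_scale // mulrC; congr (_ * _).
by rewrite /perron_root; congr perron2; field.
Qed.

Let gf_div_ge0 e z : (forall m, 0 <= e m) -> gf_finite1 e -> 0 < z <= 1 -> 0 <= gf e z / z.
Proof.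
move=> e_ge0 e_fin /andP[z_gt0 z_le1]; have z01 : 0 <= z <= 1 by rewrite ltW.
by rewrite divr_ge0 ?gf_ge0 // ltW.
Qed.

Lemma perron_root_div_gmean_le th z1 z2 : 0 < th < 1 -> 0 < z1 <= 1 -> 0 < z2 <= 1 ->
  perron_root (gmean th z1 z2) / gmean th z1 z2
  <= th * (perron_root z1 / z1) + (1 - th) * (perron_root z2 / z2).
Proof.
move=> /andP[th_gt0 th_lt1] z1_01 z2_01.
have [/andP[z1_gt0 z1_le1] /andP[z2_gt0 z2_le1]] := conj z1_01 z2_01.
set g := gmean th z1 z2.
have g01 : 0 < g <= 1.
  rewrite gmean_gt0 //= -(gmeanxx th 1 ler01).
  by apply: ler_gmean => //; exact: ltW.
have one01 : 0 <= (1 : R) <= 1 by rewrite ler01 lexx.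
have AB1 : 0 <= gf a 1 + gf b 1 by rewrite addr_ge0 ?gf_ge0.
have CD1 : 0 <= gf c 1 + gf d 1 by rewrite addr_ge0 ?gf_ge0.
have pos e z : (forall m, 0 <= e m) -> gf_finite1 e -> 0 < gf e 1 -> 0 < z <= 1 ->
    0 < gf e z / z.
  move=> e_ge0 e_fin e1_gt0 /andP[z_gt0 z_le1].
  by apply: divr_gt0 => //; apply: gf_gt0; rewrite ?z_gt0.
have entry e k' : (forall m, 0 <= e m) -> gf_finite1 e -> 0 <= k' ->
    gf e g / g + k' <= gmean th (gf e z1 / z1 + k') (gf e z2 / z2 + k').
  by move=> e_ge0 e_fin k'_ge0; apply: gf_div_gmean_le.
have entry0 e : (forall m, 0 <= e m) -> gf_finite1 e ->
    gf e g / g <= gmean th (gf e z1 / z1) (gf e z2 / z2).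
  by move=> e_ge0 e_fin; have := entry e 0 e_ge0 e_fin (lexx 0); rewrite !addr0.
have X_ge0 z : 0 < z <= 1 -> 0 <= perron_root z / z + k.
  move=> z01; rewrite perron_root_divE; last by case/andP: z01.
  apply: le_trans _ (ltW (perron2_gt_diag _ _ _ _ (pos _ _ a_ge0 a_fin A1_gt0 z01)
                                          (pos _ _ d_ge0 d_fin D1_gt0 z01))).
  by rewrite addr_ge0 ?gf_div_ge0.
suff : perron_root g / g + k
       <= th * (perron_root z1 / z1 + k) + (1 - th) * (perron_root z2 / z2 + k) by lra.
apply: le_trans (gmean_le_mean th_gt0 th_lt1 _ _ (X_ge0 _ z1_01) (X_ge0 _ z2_01)).
rewrite !perron_root_divE; try by case/andP: g01.
by apply: perron2_gmean_le => //; first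
  [ exact: pos | exact: gf_div_ge0 | exact: entry | exact: entry0
  | by rewrite addr_ge0 ?gf_div_ge0 ].
Qed.

(* (1 + h w, 1) is the first-order perturbation of the Perron eigenvector (1, 1) of M(1). *)
Let w : R := (dgf1 c + dgf1 d - gf c 1 - gf d 1 - (dgf1 a + dgf1 b - gf a 1 - gf b 1))
             / (gf a 1 + gf d 1).

Lemma perron_root_first_order h eps : 0 < h <= 1 -> 0 < 1 + h * w ->
  h * (dgf1 a - eps / 4) <= gf a 1 - gf a (1 - h) ->
  h * (dgf1 b - eps / 4) <= gf b 1 - gf b (1 - h) ->
  h * (dgf1 c - eps / 4) <= gf c 1 - gf c (1 - h) ->
  h * (dgf1 d - eps / 4) <= gf d 1 - gf d (1 - h) ->
  h * (`|w| * (`|gf a 1 + gf b 1 + mean_drift - eps| + dgf1 b + dgf1 d)) <= eps / 2 ->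
  perron_root (1 - h) <= h * (- mean_drift + eps).
Proof.
move=> /andP[h_gt0 h_le1] v1_gt0 lbA lbB lbC lbD small.
have h01 : 0 <= h <= 1 by rewrite ltW.
have z01 : 0 <= 1 - h <= 1 by lra.
have AD : gf a 1 + gf d 1 != 0 by rewrite lt0r_neq0 ?addr_gt0.
have ubB := gf_sub_le b_ge0 b_fin db_fin h h01.
have ubD := gf_sub_le d_ge0 d_fin dd_fin h h01.
have geB := gf_sub_ge0 b_ge0 b_fin h h01.
have geD := gf_sub_ge0 d_ge0 d_fin h h01.
have dB_ge0 := dgf1_ge0 b_ge0 db_fin; have dD_ge0 := dgf1_ge0 d_ge0 dd_fin.
set E := mean_drift; set X := gf a 1 + gf b 1 + E - eps.
set yA := gf a 1 - gf a (1 - h) in lbA *; set yB := gf b 1 - gf b (1 - h) in lbB ubB geB *.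
set yC := gf c 1 - gf c (1 - h) in lbC *; set yD := gf d 1 - gf d (1 - h) in lbD ubD geD *.
have hw_small : `|w| * (h * (`|X| + dgf1 b + dgf1 d)) <= eps / 2 by rewrite mulrCA.
have h_ge0 := ltW h_gt0.
have err1 : h * w * (h * X - yB) <= h * (eps / 2).
  apply: (le_trans (ler_norm _)); rewrite normrM normrM (gtr0_norm h_gt0) -mulrA ler_wpM2l //.
  apply: le_trans _ hw_small; rewrite ler_wpM2l //.
  apply: (le_trans (ler_normB _ _)); rewrite normrM (gtr0_norm h_gt0) (ger0_norm geB).
  have : 0 <= h * dgf1 d by rewrite mulr_ge0.
  lra.
have err2 : - (yD * (h * w)) <= h * (eps / 2).
  apply: (le_trans (ler_norm _)); rewrite normrN normrM normrM (gtr0_norm h_gt0) (ger0_norm geD).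
  apply: le_trans (_ : h * dgf1 d * (h * `|w|) <= _); first by rewrite ler_wpM2r ?mulr_ge0.
  rewrite (_ : _ * _ * _ = h * (`|w| * (h * dgf1 d))); last by ring.
  rewrite ler_wpM2l //; apply: le_trans _ hw_small; rewrite ler_wpM2l // ler_wpM2l //.
  by have := normr_ge0 X; lra.
apply: (perron2_le_subinvariant _ _ _ _ _ _ _ v1_gt0 ltr01
          (gf_ge0 a_ge0 a_fin _ z01) (gf_ge0 d_ge0 d_fin _ z01)).
- rewrite -subr_le0 (_ : _ - _ = h * (dgf1 a + dgf1 b - eps) - yA - yB + h * w * (h * X - yB)).
    by lra.
  by rewrite /yA /yB /X /E /mean_drift /w; field.
- rewrite -subr_le0 (_ : _ - _ = h * (dgf1 c + dgf1 d - eps) - yC - yD - yD * (h * w)).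
    by lra.
  by rewrite /yC /yD /E /mean_drift /w; field.
Qed.

Lemma perron_root_near1 eps : 0 < eps ->
  \forall h \near 0^'+, perron_root (1 - h) <= h * (- mean_drift + eps).
Proof.
move=> eps_gt0; have eps4_gt0 : 0 < eps / 4 by rewrite divr_gt0.
near=> h.
have h_gt0 : 0 < h by near: h; exact: nbhs_right_gt.
apply: perron_root_first_order.
- by rewrite h_gt0 /=; near: h; apply: nbhs_right_le; exact: ltr01.
- have : h * `|w| <= 2^-1 by near: h; exact: near0_mulr_le.
  have : - (h * `|w|) <= h * w.
    rewrite -mulrN; apply: ler_wpM2l; first exact: ltW.
    by rewrite lerNl -normrN ler_norm.
  lra.
- by near: h; exact: gf_sub_ge_near.
- by near: h; exact: gf_sub_ge_near.
- by near: h; exact: gf_sub_ge_near.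
- by near: h; exact: gf_sub_ge_near.
- by near: h; apply: near0_mulr_le; rewrite divr_gt0.
Unshelve. all: by end_near. Qed.

End Component.

Definition perron_sum {R : realType} {n : nat} (a b c d : 'I_n -> nat -> R) (z : R) : R :=
  \sum_(i < n) perron_root (a i) (b i) (c i) (d i) z.

Section Family.
Context {R : realType} {n : nat} {a b c d : 'I_n -> nat -> R}.
Implicit Types z h : R.

Lemma eqEx_ones_perron_sum z : eqEx a b c d (fun=> 1) z -> perron_sum a b c d z = 0.
Proof.
rewrite /eqEx (eq_bigr _ (fun i _ => eqEx_summand1 (a i) (b i) (c i) (d i) z)).
by rewrite -mulr_sumr => /esym/eqP; rewrite mulf_eq0 pnatr_eq0 => /eqP.
Qed.

Lemma eqEx_perron_sum_ge0 x z : (forall i, x i = 1 \/ x i = -1) ->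
  eqEx a b c d x z -> 0 <= perron_sum a b c d z.
Proof.
move=> x_sign hEx; rewrite -(pmulr_rge0 _ (ltr0n R 2)) mulr_sumr {1}hEx.
apply: ler_sum => i _; rewrite -eqEx_summand1 !lerD2r ler_wpM2r ?sqrtr_ge0 //.
by case: (x_sign i) => ->; rewrite ?lexx ?lerN10.
Qed.

Hypothesis hA : forall i, assumptionA (a i) (b i) (c i) (d i).

Lemma perron_sum_div_gmean_le th z1 z2 : 0 < th < 1 -> 0 < z1 <= 1 -> 0 < z2 <= 1 ->
  perron_sum a b c d (gmean th z1 z2) / gmean th z1 z2
  <= th * (perron_sum a b c d z1 / z1) + (1 - th) * (perron_sum a b c d z2 / z2).
Proof.
move=> th01 z1_01 z2_01; rewrite /perron_sum !mulr_suml !mulr_sumr -big_split.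
by apply: ler_sum => i _; exact: perron_root_div_gmean_le.
Qed.

Lemma perron_sum_near1 : (0 < n)%N -> ergodicE a b c d ->
  \forall h \near 0^'+, perron_sum a b c d (1 - h) < 0.
Proof.
move=> n_gt0 hE; set E := \sum_(i < n) mean_drift (a i) (b i) (c i) (d i).
have E_gt0 : 0 < E.
  move: hE; rewrite /ergodicE /Kc mulr1n; congr (0 < _).
  by apply: eq_bigr => i _; rewrite /mean_drift !mul1r.
set eps := E / (2 * n%:R).
have eps_gt0 : 0 < eps by rewrite divr_gt0 ?mulr_gt0 ?ltr0n.
near=> h.
have h_gt0 : 0 < h by near: h; exact: nbhs_right_gt.
have hall : forall i, perron_root (a i) (b i) (c i) (d i) (1 - h)
                      <= h * (- mean_drift (a i) (b i) (c i) (d i) + eps).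
  by near: h; apply: filter_forall => i; exact: perron_root_near1.
apply: (le_lt_trans (ler_sum _ (fun i _ => hall i))).
rewrite -mulr_sumr big_split /= sumrN sumr_const card_ord -/E.
rewrite (_ : eps *+ n = E / 2); last by rewrite -mulr_natl /eps; field; rewrite pnatr_eq0 -lt0n.
by rewrite pmulr_rlt0 //; lra.
Unshelve. all: by end_near. Qed.

End Family.

Theorem corollary3 (R : realType) (c : nat) (hc : (1 <= c)%N)
  (a b cc d : 'I_c -> nat -> R)
  (hA : forall i, assumptionA (a i) (b i) (cc i) (d i))
  (hE : ergodicE a b cc d) :
  forall (x : 'I_c -> R), (forall i, x i = 1 \/ x i = -1) ->
  forall beta beta1 : R,
    0 < beta < 1 -> eqEx a b cc d x beta ->
    0 < beta1 < 1 -> eqEx a b cc d (fun _ => 1) beta1 ->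
    beta <= beta1.
Proof.
move=> x x_sign beta beta1 /andP[beta_gt0 beta_lt1] hEx /andP[beta1_gt0 beta1_lt1] hE1.
rewrite leNgt; apply/negP => beta1_lt_beta.
have near_u : \forall h \near 0^'+, 0 < h < 1 - beta /\ perron_sum a b cc d (1 - h) < 0.
  near=> h; split; last by near: h; exact: perron_sum_near1.
  by apply/andP; split; near: h; [exact: nbhs_right_gt | apply: nbhs_right_lt; lra].
have [h [/andP[h_gt0 h_lt] sum_u_lt0]] := filter_ex near_u.
have beta1_01 : 0 < beta1 <= 1 by rewrite beta1_gt0 ltW.
have u_01 : 0 < 1 - h <= 1 by apply/andP; split; lra.
have beta_lt_u : beta < 1 - h by lra.
have [th th01 gmean_beta] := gmean_between _ _ _ beta1_gt0 beta1_lt_beta beta_lt_u.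
have := perron_sum_div_gmean_le hA th beta1 (1 - h) th01 beta1_01 u_01.
rewrite gmean_beta (eqEx_ones_perron_sum _ hE1) mul0r mulr0 add0r.
have := divr_ge0 (eqEx_perron_sum_ge0 _ _ x_sign hEx) (ltW beta_gt0).
have : (1 - th) * (perron_sum a b cc d (1 - h) / (1 - h)) < 0.
  by rewrite pmulr_rlt0 ?subr_gt0 ?pmulr_llt0 ?invr_gt0 //; lra.
lra.
Unshelve. all: by end_near.
Qed.
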